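(* If a Banach space $Y$ contains a strictly convex subspace $Z$ with $\dim Z>1$, then $Y$ satisfies property (AGR): there exists a Borel measurable map $F:[0,1]\to S_Y$ such that for each $y^*\in S_{Y^*}$ we have $|y^*(F(t))|<1$ for Lebesgue-almost all $t\in[0,1]$.
   Context: Scalars may be real or complex. A normed space is strictly convex if its unit sphere contains no nontrivial line segments. *)

From HB Require Import structures.
From mathcomp Require Import all_boot all_order all_algebra.
From mathcomp Require Export complex.
From mathcomp Require Export all_classical all_reals all_analysis.
Import Order.TTheory GRing.Theory Num.Theory.
Import numFieldNormedType.Exports.
Set Implicit Arguments. Unset Strict Implicit. Unset Printing Implicit Defensive.
Local Open Scope classical_set_scope.
Local Open Scope ring_scope.

Section Defs.
Variable K : numFieldType.
Variable Y : normedModType K.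

Definition lin_subspace (Z : set Y) : Prop :=
  Z 0 /\ (forall (a : K) (x y : Y), Z x -> Z y -> Z (a *: x + y)).

Definition dim_gt1 (Z : set Y) : Prop :=
  exists x y : Y, Z x /\ Z y /\
    (forall a b : K, a *: x + b *: y = 0 -> a = 0 /\ b = 0).

Definition strictly_convex_sub (Z : set Y) : Prop :=
  forall x y : Y, Z x -> Z y -> `|x| = 1 -> `|y| = 1 -> x <> y ->
    ~ (forall t : K, 0 <= t <= 1 -> `|(1 - t) *: x + t *: y| = 1).

(* y^* is an element of S_{Y^*}: a linear functional of norm exactly 1,
   the norm being sup_{|y| <= 1} |y^*(y)| *)
Definition dual_unit_sphere (f : Y -> K) : Prop :=
  (forall (a : K) (x y : Y), f (a *: x + y) = a * f x + f y) /\
  (forall y : Y, `|f y| <= `|y|) /\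
  (forall e : K, 0 < e -> exists y : Y, `|y| <= 1 /\ 1 - e < `|f y|).

Definition borel_meas_on01 (R : realType) (F : R -> Y) : Prop :=
  forall U : set Y, open U ->
    measurable ([set t : R | 0 <= t <= 1] `&` (F @^-1` U)).

Definition AGR (R : realType) : Prop :=
  exists F : R -> Y,
    borel_meas_on01 F /\
    (forall t : R, 0 <= t <= 1 -> `|F t| = 1) /\
    (forall f : Y -> K, dual_unit_sphere f ->
       {ae (@lebesgue_measure R), forall t : R, 0 <= t <= 1 -> `|f (F t)| < 1}).
End Defs.

From mathcomp Require Import all_boot all_order all_algebra.
From mathcomp Require Import complex.
From mathcomp Require Import all_classical all_reals all_analysis.
From mathcomp Require Import measurable_realfun ring.
Import Order.TTheory GRing.Theory Num.Theory.
Import numFieldNormedType.Exports.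
Local Open Scope classical_set_scope.
Local Open Scope ring_scope.
Set Implicit Arguments. Unset Strict Implicit.

(* Pick independent x, y in Z and let F t be the normalisation of (1 - t) x + t y,
   a continuous path on the unit sphere of Z.  A norm-one functional f with
   |f (F t)| = 1 makes f (F t)^-1 F t a unit vector of Z on which f equals 1;
   by strict convexity there is at most one such vector, and since distinct t give
   non-proportional vectors F t, |f (F t)| < 1 fails for at most one t, a Lebesgue
   null set. *)

Section LinearFunctional.
Variables (K : numFieldType) (Y : normedModType K) (f : Y -> K).
Hypothesis f_lin : forall (a : K) (x y : Y), f (a *: x + y) = a * f x + f y.

Lemma functional0 : f 0 = 0.
Proof.
have := f_lin 1 0 0; rewrite scaler0 addr0 mul1r => /eqP.
by rewrite -subr_eq subrr eq_sym => /eqP.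
Qed.

Lemma functionalZ a x : f (a *: x) = a * f x.
Proof. by have := f_lin a x 0; rewrite !addr0 functional0 addr0. Qed.

Lemma functionalD x y : f (x + y) = f x + f y.
Proof. by have := f_lin 1 x y; rewrite scale1r mul1r. Qed.

End LinearFunctional.

Section Subspace.
Variables (K : numFieldType) (Y : normedModType K) (Z : set Y).
Hypothesis Z_sub : lin_subspace Z.

Lemma lin_subspaceZ a x : Z x -> Z (a *: x).
Proof. by case: Z_sub => Z0 Zlin Zx; have := Zlin a x 0 Zx Z0; rewrite addr0. Qed.

Lemma lin_subspaceD x y : Z x -> Z y -> Z (x + y).
Proof. by case: Z_sub => _ Zlin Zx Zy; have := Zlin 1 x y Zx Zy; rewrite scale1r. Qed.

End Subspace.

Lemma strictly_convex_norming_uniq (K : numFieldType) (Y : normedModType K)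
    (Z : set Y) (f : Y -> K) :
  strictly_convex_sub Z -> dual_unit_sphere f ->
  forall u v, Z u -> Z v -> `|u| = 1 -> `|v| = 1 -> f u = 1 -> f v = 1 -> u = v.
Proof.
move=> Z_sc [f_lin [f_le _]] u v Zu Zv nu nv fu fv.
apply: contrapT => uv; apply: (Z_sc u v Zu Zv nu nv uv) => t /andP[t0 t1].
apply/eqP; rewrite eq_le; apply/andP; split.
  apply: (le_trans (ler_normD _ _)); rewrite !normrZ nu nv !mulr1.
  by rewrite (ger0_norm t0) ger0_norm ?subr_ge0 // subrK.
apply: le_trans (f_le ((1 - t) *: u + t *: v)).
by rewrite (functionalD f_lin) !(functionalZ f_lin) fu fv !mulr1 subrK normr1.
Qed.

Section Normalize.
Variables (K : numFieldType) (Y : normedModType K).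

Definition normalize (v : Y) : Y := `|v|^-1 *: v.

Lemma norm_normalize (v : Y) :
  v != 0 -> `|normalize v| = 1.
Proof. by move=> v0; rewrite normrZ ger0_norm ?invr_ge0 // mulVf ?normr_eq0. Qed.

Lemma continuous_normalize (T : topologicalType) (g : T -> Y) (t : T) :
  g t != 0 -> {for t, continuous g} -> {for t, continuous (normalize \o g)}.
Proof.
move=> gt0 g_cont; apply: continuousZ => //.
apply: continuousV; first by rewrite normr_eq0.
exact: (continuous_comp g_cont (@norm_continuous _ _ _)).
Qed.

End Normalize.

Section Segment.
Variables (K : numFieldType) (Y : normedModType K) (x y : Y).
Hypothesis xy_indep : forall a b : K, a *: x + b *: y = 0 -> a = 0 /\ b = 0.

Definition segment_point (s : K) : Y := (1 - s) *: x + s *: y.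

Lemma segment_point_neq0 s : segment_point s != 0.
Proof.
by apply/eqP => /xy_indep[]; move=> + s0; rewrite s0 subr0 => /eqP; rewrite oner_eq0.
Qed.

Lemma continuous_segment_point : continuous segment_point.
Proof.
move=> s; apply: (@continuousD K Y K (fun s => (1 - s) *: x) ( *:%R^~ y));
  apply: continuousZr_tmp; last exact: cvg_id.
exact: (@continuousB K K^o K (cst 1) id s (@cst_continuous _ _ _ _) cvg_id).
Qed.

Lemma segment_point_proportional a b s t :
  a != 0 -> a *: segment_point s = b *: segment_point t -> s = t.
Proof.
move=> a0 ab_eq.
have /xy_indep[cx cy] :
    (a * (1 - s) - b * (1 - t)) *: x + (a * s - b * t) *: y = 0.
  have : a *: segment_point s - b *: segment_point t = 0 by rewrite ab_eq subrr.
  by rewrite /segment_point !scalerDr !scalerA => <-; rewrite !scalerBl addrACA -opprD.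
have ab : a = b.
  apply/eqP; rewrite -subr_eq0.
  have -> : a - b = (a * (1 - s) - b * (1 - t)) + (a * s - b * t) by ring.
  by rewrite cx cy addr0.
by move: cy; rewrite -ab -mulrBr => /eqP; rewrite mulf_eq0 (negPf a0) subr_eq0 => /eqP.
Qed.

End Segment.

Lemma norming_segment_uniq (K : numFieldType) (Y : normedModType K)
    (Z : set Y) (x y : Y) (f : Y -> K) :
  lin_subspace Z -> strictly_convex_sub Z -> Z x -> Z y ->
  (forall a b : K, a *: x + b *: y = 0 -> a = 0 /\ b = 0) ->
  dual_unit_sphere f -> forall s t : K,
  `|f (normalize (segment_point x y s))| = 1 ->
  `|f (normalize (segment_point x y t))| = 1 -> s = t.
Proof.
move=> Z_sub Z_sc Zx Zy xy_indep f_dual s t fs ft.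
have [f_lin _] := f_dual.
pose F r := normalize (segment_point x y r).
have seg_neq0 r : segment_point x y r != 0 by exact: segment_point_neq0.
have ZF r : Z (F r).
  by apply: (lin_subspaceZ Z_sub); apply: (lin_subspaceD Z_sub); apply: (lin_subspaceZ Z_sub).
pose u r := (f (F r))^-1 *: F r.
have fseg_neq0 r : `|f (F r)| = 1 -> f (F r) != 0.
  by move=> fr; rewrite -normr_eq0 fr oner_eq0.
have u_norm r : `|f (F r)| = 1 -> `|u r| = 1.
  by move=> fr; rewrite normrZ norm_normalize // mulr1 normfV fr invr1.
have fu r : `|f (F r)| = 1 -> f (u r) = 1.
  by move=> fr; rewrite (functionalZ f_lin) mulVf // fseg_neq0.
have := strictly_convex_norming_uniq Z_sc f_dual
  (lin_subspaceZ Z_sub _ (ZF s)) (lin_subspaceZ Z_sub _ (ZF t))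
  (u_norm _ fs) (u_norm _ ft) (fu _ fs) (fu _ ft).
rewrite /u /F /normalize !scalerA.
apply: segment_point_proportional => //.
by rewrite mulf_neq0 ?invr_eq0 ?normr_eq0 ?fseg_neq0.
Qed.

Lemma ae_lebesgue_except_one_point (R : realType) (P : R -> Prop) :
  (forall s t, ~ P s -> ~ P t -> s = t) ->
  {ae (@lebesgue_measure R), forall t, P t}.
Proof.
move=> P_uniq; have [[t0 Pt0] | P_all] := pselect (exists t0, ~ P t0).
- exists [set t0]; split; [exact: measurable_set1 | exact: lebesgue_measure_set1 |].
  by move=> t /= Pt; exact: P_uniq Pt Pt0.
- exists set0; split; [exact: measurable0 | exact: measure0 |].
  by move=> t /= Pt; apply: P_all; exists t.
Qed.

Lemma continuous_borel_meas_on01 (R : realType) (K : numFieldType)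
    (Y : normedModType K) (F : R -> Y) :
  continuous F -> borel_meas_on01 F.
Proof.
move=> F_cont U U_open.
have -> : [set t : R | 0 <= t <= 1] = `[0, 1]%classic.
  by apply/seteqP; split => t /=; rewrite in_itv.
apply: measurableI; first exact: measurable_itv.
by apply: open_measurable; apply: open_comp => // t _; exact: F_cont.
Qed.

Section ScalarEmbedding.
Variables (R : realType) (K : numFieldType) (iota : R -> K).
Hypotheses (iota_inj : injective iota) (iota_cont : continuous iota).

Theorem AGR_of_strictly_convex_subspace (Y : normedModType K) (Z : set Y) :
  lin_subspace Z -> dim_gt1 Z -> strictly_convex_sub Z -> AGR Y R.
Proof.
move=> Z_sub [x [y [Zx [Zy xy_indep]]]] Z_sc.
pose F t := normalize (segment_point x y (iota t)).
have F_norm t : `|F t| = 1 by exact/norm_normalize/segment_point_neq0.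
exists F; split; [|split] => //.
  apply: continuous_borel_meas_on01 => t.
  apply: (@continuous_normalize _ _ _ (segment_point x y \o iota)).
    exact: segment_point_neq0.
  by apply: continuous_comp; [exact: iota_cont | exact: continuous_segment_point].
move=> f f_dual; apply: ae_lebesgue_except_one_point => s t.
have [_ [f_le _]] := f_dual.
have norm1 r : ~ (0 <= r <= 1 -> `|f (F r)| < 1) -> `|f (F r)| = 1.
  move=> fr; apply/eqP; rewrite eq_le -{1}(F_norm r) f_le /= real_leNgt ?realE ?normr_ge0 ?ler01 //.
  by apply/negP => fr_lt; apply: fr.
move=> /norm1 fs /norm1 ft; apply: iota_inj.
exact: norming_segment_uniq Z_sub Z_sc Zx Zy xy_indep f_dual _ _ fs ft.
Qed.

End ScalarEmbedding.

(* The cast selects the topology of [R[i]] as a normed field. *)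
Lemma continuous_complex_real (R : realType) :
  continuous (fun t : R => (t%:C)%C : (R[i] : numFieldType)).
Proof.
move=> t; apply/cvgrPdist_lt => e e0.
have e_real : e \is Num.real by exact: gtr0_real.
have Re_e0 : 0 < complex.Re e by rewrite -ltcR (RRe_real e_real).
near=> s.
rewrite -(RRe_real e_real) -rmorphB normc_def /= expr0n /= addr0 sqrtr_sqr ltcR.
near: s; by move: (@cvg_id _ (nbhs t)) => /cvgrPdist_lt; apply.
Unshelve. all: by end_near.
Qed.

Theorem lemma4p10 (R : realType) :
  (forall (Y : completeNormedModType R) (Z : set Y),
      closed Z -> lin_subspace Z -> dim_gt1 Z -> strictly_convex_sub Z ->
      AGR Y R) /\
  (forall (Y : completeNormedModType R[i]) (Z : set Y),
      closed Z -> lin_subspace Z -> dim_gt1 Z -> strictly_convex_sub Z ->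
      AGR Y R).
Proof.
split=> Y Z _.
- by apply: (@AGR_of_strictly_convex_subspace R R id) => // t; exact: cvg_id.
- apply: (@AGR_of_strictly_convex_subspace R R[i] (fun t => (t%:C)%C)).
    by move=> s t [].
  exact: continuous_complex_real.
Qed.
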